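(* Let $d\ge1$ and let $H\subseteq\{0,\dots,d\}^{d+1}$ be an octahedral system with $|H|\le d^2$. Then $H$ contains no isolated edge; that is, for every $e\in H$ there exists $f\in H$, $f\neq e$, that differs from $e$ in exactly one coordinate.
   Context: Fix $d\ge1$. There are $d+1$ colours $0,1,\dots,d$, and each colour class consists of $d+1$ points labelled $0,\dots,d$. An edge is a tuple $e=(e_0,\dots,e_d)\in\{0,\dots,d\}^{d+1}$ (point $e_i$ of colour $i$ for each $i$); a hypergraph is a set $H$ of such tuples. For a colour $i$, an $\hat i$-transversal is a tuple $t=(t_k)_{k\ne i}\in\{0,\dots,d\}^{\{0,\dots,d\}\setminus\{i\}}$ (one point of every colour except $i$); an $\hat i$-octahedron is a pair of $\hat i$-transversals $t,t'$ with $t_k\neq t'_k$ for all $k\ne i$. $H$ is an octahedral system if for every colour $i$, every $\hat i$-octahedron $(t,t')$, the parity of $|\{e\in H: e_i=s,\ e_k\in\{t_k,t'_k\}\ \forall k\ne i\}|$ is the same for all $s\in\{0,\dots,d\}$. An edge $e\in H$ is isolated in $H$ if no other edge of $H$ differs from $e$ in exactly one coordinate. *)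

From mathcomp Require Import all_boot.
Set Implicit Arguments. Unset Strict Implicit. Unset Printing Implicit Defensive.

(* Colours and points are both 'I_(d.+1) = {0,...,d}. *)
Definition edge (d : nat) := {ffun 'I_d.+1 -> 'I_d.+1}.

(* An \hat i-transversal is represented by a function on all colours whose
   value at colour i is ignored. (t, t') is an \hat i-octahedron iff
   t k != t' k for all k != i. *)
Definition is_octahedron (d : nat) (i : 'I_d.+1) (t t' : edge d) : bool :=
  [forall k, (k != i) ==> (t k != t' k)].

Definition oct_count (d : nat) (H : {set edge d}) (i s : 'I_d.+1)
    (t t' : edge d) : nat :=
  #|[set e in H | (e i == s) &&
       [forall k, (k != i) ==> ((e k == t k) || (e k == t' k))]]|.

Definition octahedral (d : nat) (H : {set edge d}) : Prop :=
  forall (i : 'I_d.+1) (t t' : edge d), is_octahedron i t t' ->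
    forall s s' : 'I_d.+1, odd (oct_count H i s t t') = odd (oct_count H i s' t t').

Definition differ_in_one (d : nat) (e f : edge d) : bool :=
  #|[set k : 'I_d.+1 | e k != f k]| == 1.

From mathcomp Require Import all_boot.
From mathcomp Require Import zify.

(* Suppose e is an isolated edge of an
   octahedral system H.  Call a tuple c "opposite" to e if c_k != e_k for
   every colour k; there are d^(d+1) of them.  For such c, the pair (e, c) is
   an octahedron for colour 0, and if no edge of H other than e lay in the
   box {e_k, c_k}_k, the parity counts at s = e_0 and s = c_0 would be 1 and 0,
   contradicting octahedrality.  So every opposite c is "covered" by some
   f in H :\ e.  Conversely an edge f differing from e in the colour set D
   lies in the box of exactly d^(d+1-|D|) opposite tuples, and isolation of e
   forces |D| >= 2.  Double counting gives d^(d+1) <= (|H| - 1) * d^(d-1),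
   i.e. |H| > d^2. *)

Lemma card_ffun_pointwise (aT rT : finType) (F : aT -> pred rT) :
  #|[set f : {ffun aT -> rT} | [forall x, f x \in F x]]| = \prod_(x : aT) #|F x|.
Proof.
rewrite (_ : #|_| = #|(family F : simpl_pred {ffun aT -> rT})|); last first.
  by apply: eq_card => f; rewrite inE.
by rewrite card_family foldrE big_map /image_mem big_enum.
Qed.

Section BoxCounting.

Context {aT rT : finType} (e : {ffun aT -> rT}).

Definition opposite (c : {ffun aT -> rT}) : bool := [forall k, c k != e k].

Definition in_box (c f : {ffun aT -> rT}) : bool :=
  [forall k, (f k == e k) || (f k == c k)].

Definition diff_set (f : {ffun aT -> rT}) : {set aT} := [set k | e k != f k].

(* The opposite tuples whose box contains f: c is forced to f k on the
   coordinates where f differs from e, and is any value other than e k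
   elsewhere. *)
Lemma card_boxes_through f :
  #|[set c | opposite c && in_box c f]| = #|rT|.-1 ^ (#|aT| - #|diff_set f|).
Proof.
pose F k := [pred y | if k \in diff_set f then y == f k else y != e k].
have -> : [set c | opposite c && in_box c f] =
          [set c : {ffun aT -> rT} | [forall k, c k \in F k]].
  apply/setP => c; rewrite !inE; apply/andP/forallP => [[/forallP op /forallP bx] k|cF].
    rewrite inE /= inE; case: ifP => [ef|_]; last exact: op.
    by have := bx k; rewrite eq_sym (negbTE ef) eq_sym.
  split; apply/forallP => k; have := cF k; rewrite inE /= inE.
  - by case: ifP => [ef /eqP ->|//]; rewrite eq_sym.
  - by case: ifP => [_ /eqP ->|/negbFE/eqP ->]; rewrite eqxx ?orbT.
rewrite card_ffun_pointwise.
rewrite (eq_bigr (fun k => if k \in ~: diff_set f then #|rT|.-1 else 1)); last first.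
  move=> k _; rewrite inE /F; case: (k \in diff_set f) => /=.
  - by rewrite -(card1 (f k)); apply: eq_card => y; rewrite !inE.
  - by rewrite -(cardC1 (e k)); apply: eq_card => y; rewrite !inE.
by rewrite -big_mkcond prod_nat_const cardsCs setCK.
Qed.

(* Taking f = e, which lies in every box, counts the opposite tuples. *)
Lemma card_opposite : #|[set c | opposite c]| = #|rT|.-1 ^ #|aT|.
Proof.
have emptyD : diff_set e = set0 by apply/setP => k; rewrite !inE eqxx.
have -> : #|aT| = #|aT| - #|diff_set e| by rewrite emptyD cards0 subn0.
rewrite -card_boxes_through.
apply: eq_card => c; rewrite !inE.
by case: (opposite c) => //=; apply/esym/forallP => k; rewrite eqxx.
Qed.

Lemma opposite_cover_bound (S : {set {ffun aT -> rT}}) :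
  (forall c, opposite c -> exists2 f, f \in S & in_box c f) ->
  #|[set c | opposite c]| <= \sum_(f in S) #|[set c | opposite c && in_box c f]|.
Proof.
move=> cover.
rewrite -sum1_card.
rewrite [X in _ <= X](eq_bigr (fun f => \sum_(c | opposite c) in_box c f : nat));
  last first.
  move=> f _; rewrite -sum1_card big_mkcond [RHS]big_mkcond; apply: eq_bigr => c _.
  by rewrite inE; case: (opposite c); case: (in_box c f).
rewrite exchange_big /= (eq_bigl opposite) => [|c]; last by rewrite inE.
apply: leq_sum => c /cover [f fS fc].
by rewrite (bigD1 f) //= fc.
Qed.

End BoxCounting.

(* In an octahedral system, the box spanned by an edge e of H and any tuple
   opposite to e contains another edge of H: otherwise the colour-0 counts of
   the octahedron (e, c) would be 1 at s = e_0 and 0 at s = c_0. *)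
Lemma octahedral_box_hit {d} {H : {set edge d}} {e : edge d} :
  octahedral H -> e \in H ->
  forall c, opposite e c -> exists2 f, f \in H :\ e & in_box e c f.
Proof.
move=> hoct He c /forallP opp.
have [/existsP[f /andP[fH fc]]|none] := boolP [exists f, (f \in H :\ e) && in_box e c f].
  by exists f.
have count_e : oct_count H ord0 (e ord0) e c = 1.
  rewrite /oct_count -(cards1 e); apply: eq_card => f; rewrite !inE.
  have [->|fe] := eqVneq f e.
    by rewrite He eqxx; apply/forallP => k; rewrite eqxx implybT.
  apply/negbTE/negP => /and3P[fH f0 /forallP fk]; move/existsP: none; apply; exists f.
  rewrite !inE fe fH; apply/forallP => k.
  by have [->|kn] := eqVneq k ord0; [rewrite f0 | exact: (implyP (fk k))].
have count_c : oct_count H ord0 (c ord0) e c = 0.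
  apply/eqP; rewrite cards_eq0; apply/eqP/setP => f; rewrite !inE.
  apply/negbTE/negP => /and3P[fH f0 /forallP fk]; move/existsP: none; apply; exists f.
  have fe : f != e by apply: contra_neq (opp ord0) => fe; rewrite -(eqP f0) fe.
  rewrite !inE fe fH; apply/forallP => k.
  by have [->|kn] := eqVneq k ord0; [rewrite f0 orbT | exact: (implyP (fk k))].
have oct : is_octahedron ord0 e c.
  by apply/forallP => k; apply/implyP => _; rewrite eq_sym opp.
by have := hoct _ _ _ oct (e ord0) (c ord0); rewrite count_e count_c.
Qed.

Lemma far_of_not_adjacent {d} {e f : edge d} :
  f != e -> ~~ differ_in_one e f -> 1 < #|diff_set e f|.
Proof.
move=> fe; rewrite /differ_in_one -/(diff_set e f) ltn_neqAle eq_sym => -> /=.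
rewrite card_gt0; apply: contra_neq fe => D0; apply/ffunP => k.
by apply/eqP; apply: contraT => fk; rewrite -(in_set0 k) -D0 inE eq_sym.
Qed.

Theorem lemma2 (d : nat) (hd : 1 <= d) (H : {set edge d})
    (hoct : octahedral H) (hcard : #|H| <= d ^ 2) :
  forall e, e \in H -> exists f, [/\ f \in H, f != e & differ_in_one e f].
Proof.
move=> e He.
have [/existsP[f /and3P[fH fe adj]]|isolated] :=
  boolP [exists f, [&& f \in H, f != e & differ_in_one e f]]; first by exists f.
exfalso.
have far f : f \in H :\ e -> 1 < #|diff_set e f|.
  rewrite !inE => /andP[fe fH]; apply: (far_of_not_adjacent fe).
  by apply: contra isolated => adj; apply/existsP; exists f; rewrite fH fe adj.
have total : d ^ d.+1 <= #|H :\ e| * d ^ d.-1.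
  have := opposite_cover_bound e (H :\ e) (octahedral_box_hit hoct He).
  rewrite card_opposite !card_ord /= => /leq_trans; apply.
  rewrite -sum_nat_const; apply: leq_sum => f /far farf.
  by rewrite card_boxes_through card_ord leq_pexp2l //; lia.
have split_exp : d ^ d.+1 = d ^ 2 * d ^ d.-1 by rewrite -expnD; congr (_ ^ _); lia.
have pos : 0 < d ^ d.-1 by rewrite expn_gt0 hd.
have many_others : d ^ 2 <= #|H :\ e| by rewrite -(leq_pmul2r pos) -split_exp.
have := cardsD1 e H; rewrite He; lia.
Qed.
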